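(* If $x\ge1$ and $y\ge1$, then $\Gamma(x,y)\ge B(x,y)$. If $0<x\le1$ and $0<y\le1$, then $\Gamma(x,y)\le B(x,y)$.
   Context: For $x>0,y>0$ the Bigamma function is the (convergent) improper integral $\Gamma(x,y):=\int_0^1(-\ln t)^{x-1}\big(-\ln(1-t)\big)^{y-1}\,dt$. $B(x,y)=\int_0^1t^{x-1}(1-t)^{y-1}\,dt$ is the Euler Beta function. *)

From mathcomp Require Import all_boot all_order all_algebra.
From mathcomp Require Import all_classical all_reals all_analysis.
Set Implicit Arguments. Unset Strict Implicit. Unset Printing Implicit Defensive.
Import Order.TTheory GRing.Theory Num.Theory.
Local Open Scope classical_set_scope.
Local Open Scope ring_scope.

Definition Bigamma (R : realType) (x y : R) : \bar R :=
  (\int[@lebesgue_measure R]_(t in `]0%R, 1%R[)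
     ((- ln t) `^ (x - 1) * (- ln (1 - t)) `^ (y - 1))%:E)%E.

Definition EulerBeta (R : realType) (x y : R) : \bar R :=
  (\int[@lebesgue_measure R]_(t in `]0%R, 1%R[)
     (t `^ (x - 1) * (1 - t) `^ (y - 1))%:E)%E.

(** Substituting [t := 1 - t] turns the Bigamma integrand into
    [(-ln (1 - t))^(x-1) (-ln t)^(y-1)].  On [0 < t < 1] we have
    [t <= -ln (1 - t)] and [1 - t <= -ln t] (both from [ln u <= u - 1]), so this
    integrand dominates [t^(x-1) (1-t)^(y-1)] pointwise when both exponents are
    nonnegative and is dominated by it when both are nonpositive; integrate. *)
From mathcomp Require Import all_boot all_order all_algebra.
From mathcomp Require Import all_classical all_reals all_analysis.
From mathcomp Require Import lra measurable_realfun.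
Import Order.TTheory GRing.Theory Num.Theory.
Local Open Scope classical_set_scope.
Local Open Scope ring_scope.

Section bigamma_beta.
Context {R : realType}.
Local Notation mu := (@lebesgue_measure R).

Lemma le0_ger_powR (r : R) : r <= 0 ->
  {in Num.pos &, {homo (fun a => a `^ r) : a b /~ a <= b}}.
Proof.
move=> r0 a b; rewrite !posrE => a0 b0 ab.
by rewrite /powR !gt_eqF // ler_expR ler_wnM2l // ler_ln.
Qed.

Lemma onem_le_lnN (t : R) : 0 < t -> 1 - t <= - ln t.
Proof.
move=> t0; rewrite lerNr opprB.
by have := @le_ln1Dx R (t - 1); rewrite subrKC; apply; lra.
Qed.

Lemma preimage_subr_itv_oc (c a b : R) :
  (fun t => c - t) @^-1` `]a, b]%classic = `[c - b, c - a[%classic.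
Proof.
by apply/seteqP; split => t /=; rewrite !in_itv /= => /andP[? ?];
  apply/andP; split; lra.
Qed.

Lemma preimage_subr_itv_oo (c a b : R) :
  (fun t => c - t) @^-1` `]a, b[%classic = `]c - b, c - a[%classic.
Proof.
by apply/seteqP; split => t /=; rewrite !in_itv /= => /andP[? ?];
  apply/andP; split; lra.
Qed.

Lemma measurable_subr (c : R) :
  measurable_fun [set: measurableTypeR R]
    ((fun t : R => c - t) : measurableTypeR R -> measurableTypeR R).
Proof. exact: measurable_funB. Qed.

Lemma lebesgue_measure_subr (c : R) (A : set R) : measurable A ->
  pushforward mu ((fun t => c - t) : R -> measurableTypeR R) A = mu A.
Proof.
move=> mA; apply/esym/lebesgue_measure_unique => //=; first exact: measurable_subr.
move=> _ _ [[a b]] _ <-; rewrite /pushforward /= preimage_subr_itv_oc.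
rewrite !lebesgue_measure_itv /= !lte_fin.
have -> : (c - b < c - a) = (a < b) by apply/idP/idP; lra.
by case: ifPn => // _; rewrite -!EFinD; congr EFin; lra.
Qed.

Lemma ge0_integral_subr (c : R) (D : set R) (f : R -> \bar R) :
  measurable D -> measurable_fun D f -> {in D, forall t, 0 <= f t}%E ->
  (\int[mu]_(t in D) f t =
   \int[mu]_(t in (fun t => c - t)%R @^-1` D) f (c - t)%R)%E.
Proof.
move=> mD mf f0; rewrite -(ge0_integral_pushforward (measurable_subr c)) //.
apply: eq_measure_integral => //=; first exact: measurable_subr.
by move=> _ A mA _; rewrite lebesgue_measure_subr.
Qed.

Lemma measurable_beta_integrand (p q : R) :
  measurable_fun [set: R] (fun t => t `^ p * (1 - t) `^ q).
Proof.
apply: measurable_funM; first exact: measurable_powR.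
exact: measurableT_comp (measurable_powR q) (measurable_subr 1).
Qed.

Lemma measurable_lnN_powR (p : R) (h : R -> R) : measurable_fun [set: R] h ->
  measurable_fun [set: R] (fun t => (- ln (h t)) `^ p).
Proof.
move=> mh; apply: measurableT_comp (measurable_powR p) _.
by apply: measurableT_comp (measurable_funN _) _ => //; exact: measurableT_comp.
Qed.

Lemma Bigamma_reflect (x y : R) : Bigamma x y =
  (\int[mu]_(t in `]0%R, 1%R[)
     ((- ln (1 - t)) `^ (x - 1) * (- ln t) `^ (y - 1))%:E)%E.
Proof.
rewrite /Bigamma (ge0_integral_subr 1).
- rewrite preimage_subr_itv_oo subrr subr0.
  by apply: eq_integral => t _; rewrite subKr.
- exact: measurable_itv.
- apply/measurable_EFinP/measurable_funTS/measurable_funM;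
    apply: measurable_lnN_powR => //; exact: measurable_subr.
- by move=> t _; rewrite lee_fin mulr_ge0 ?powR_ge0.
Qed.

Lemma measurable_reflected_bigamma_integrand (p q : R) :
  measurable_fun [set: R] (fun t => (- ln (1 - t)) `^ p * (- ln t) `^ q).
Proof.
apply: measurable_funM; apply: measurable_lnN_powR => //.
exact: measurable_subr.
Qed.

Lemma lnN_bounds (t : R) : 0 < t < 1 -> t <= - ln (1 - t) /\ 1 - t <= - ln t.
Proof.
move=> /andP[t0 t1]; split; last exact: onem_le_lnN.
by rewrite -{1}(subKr 1 t) onem_le_lnN // subr_gt0.
Qed.

Lemma beta_le_bigamma_integrand (p q t : R) : 0 <= p -> 0 <= q -> 0 < t < 1 ->
  t `^ p * (1 - t) `^ q <= (- ln (1 - t)) `^ p * (- ln t) `^ q.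
Proof.
move=> p0 q0 t01; have [le_t le_onemt] := lnN_bounds t t01; case/andP: t01 => t0 t1.
by apply: ler_pM; rewrite ?powR_ge0 //; apply: ge0_ler_powR; rewrite ?nnegrE //; lra.
Qed.

Lemma bigamma_le_beta_integrand (p q t : R) : p <= 0 -> q <= 0 -> 0 < t < 1 ->
  (- ln (1 - t)) `^ p * (- ln t) `^ q <= t `^ p * (1 - t) `^ q.
Proof.
move=> p0 q0 t01; have [le_t le_onemt] := lnN_bounds t t01; case/andP: t01 => t0 t1.
by apply: ler_pM; rewrite ?powR_ge0 //; apply: le0_ger_powR; rewrite ?posrE //; lra.
Qed.

Lemma EulerBeta_le_Bigamma (x y : R) : 1 <= x -> 1 <= y ->
  (EulerBeta x y <= Bigamma x y)%E.
Proof.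
move=> x1 y1; rewrite Bigamma_reflect /EulerBeta; apply: ge0_le_integral.
- exact: measurable_itv.
- by move=> t _; rewrite lee_fin mulr_ge0 ?powR_ge0.
- by apply/measurable_EFinP/measurable_funTS; exact: measurable_beta_integrand.
- by apply/measurable_EFinP/measurable_funTS; exact: measurable_reflected_bigamma_integrand.
- move=> t; rewrite /= in_itv /= lee_fin => t01.
  by apply: beta_le_bigamma_integrand => //; rewrite subr_ge0.
Qed.

Lemma Bigamma_le_EulerBeta (x y : R) : x <= 1 -> y <= 1 ->
  (Bigamma x y <= EulerBeta x y)%E.
Proof.
move=> x1 y1; rewrite Bigamma_reflect /EulerBeta; apply: ge0_le_integral.
- exact: measurable_itv.
- by move=> t _; rewrite lee_fin mulr_ge0 ?powR_ge0.
- by apply/measurable_EFinP/measurable_funTS; exact: measurable_reflected_bigamma_integrand.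
- by apply/measurable_EFinP/measurable_funTS; exact: measurable_beta_integrand.
- move=> t; rewrite /= in_itv /= lee_fin => t01.
  by apply: bigamma_le_beta_integrand => //; rewrite subr_le0.
Qed.

End bigamma_beta.

Theorem mainTheorem9 (R : realType) :
  (forall x y : R, 1 <= x -> 1 <= y -> (EulerBeta x y <= Bigamma x y)%E) /\
  (forall x y : R, 0 < x -> x <= 1 -> 0 < y -> y <= 1 ->
     (Bigamma x y <= EulerBeta x y)%E).
Proof.
split; first exact: EulerBeta_le_Bigamma.
by move=> x y _ x1 _ y1; exact: Bigamma_le_EulerBeta.
Qed.
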